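(* Let $f \in \mathrm{Inj}(\Omega)$ and $h \in \mathrm{Fin}(\Omega)$. Then $(f)\mathrm{C}_{\mathrm{open}} = (hf)\mathrm{C}_{\mathrm{open}}$ and $(f)\mathrm{C}_{\mathrm{open}} = (fh)\mathrm{C}_{\mathrm{open}}$.
   Context: $\Omega$ is a countably infinite set; maps are written on the right and composed left to right ($(\alpha)fg=((\alpha)f)g$). $\mathrm{Inj}(\Omega)$ is the monoid of injective maps $\Omega\to\Omega$; $\mathrm{Fin}(\Omega)$ the group of permutations of $\Omega$ moving only finitely many points. For $f\in\mathrm{Inj}(\Omega)$, a cycle of $f$ is a nonempty $\Sigma\subseteq\Omega$ such that (a) for all $\alpha\in\Omega$, $(\alpha)f\in\Sigma$ iff $\alpha\in\Sigma$, and (b) no proper nonempty subset of $\Sigma$ satisfies (a). A forward cycle is an infinite cycle $\Sigma$ with $\Sigma\setminus(\Omega)f\ne\emptyset$; an open cycle is an infinite cycle that is not forward. $(f)\mathrm{C}_{\mathrm{open}}$ is the number of open cycles of $f$. *)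

From Stdlib Require Import List.
Set Implicit Arguments.

(* Omega is modelled as an arbitrary type equipped with a bijection to nat
   (i.e. a countably infinite set). Maps are ordinary functions; the paper's
   left-to-right composition (alpha)hf = ((alpha)h)f is written explicitly. *)

Definition bijective_map {A B : Type} (e : A -> B) : Prop :=
  exists g : B -> A, (forall a, g (e a) = a) /\ (forall b, e (g b) = b).

Definition countably_infinite (T : Type) : Prop :=
  exists e : T -> nat, bijective_map e.

Definition injective_map {T : Type} (f : T -> T) : Prop :=
  forall x y, f x = f y -> x = y.

Definition finitary_perm {T : Type} (h : T -> T) : Prop :=
  bijective_map h /\ exists l : list T, forall x, h x <> x -> In x l.

Definition lrcomp {T : Type} (f g : T -> T) : T -> T := fun a => g (f a).

Definition finite_set {T : Type} (S : T -> Prop) : Prop :=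
  exists l : list T, forall x, S x -> In x l.

Definition f_closed {T : Type} (f : T -> T) (S : T -> Prop) : Prop :=
  forall a, S (f a) <-> S a.

Definition is_cycle {T : Type} (f : T -> T) (S : T -> Prop) : Prop :=
  (exists x, S x) /\ f_closed f S /\
  (forall S' : T -> Prop, (forall x, S' x -> S x) -> (exists x, S' x) ->
     f_closed f S' -> forall x, S x -> S' x).

Definition forward_cycle {T : Type} (f : T -> T) (S : T -> Prop) : Prop :=
  is_cycle f S /\ ~ finite_set S /\ exists x, S x /\ forall y, f y <> x.

Definition open_cycle {T : Type} (f : T -> T) (S : T -> Prop) : Prop :=
  is_cycle f S /\ ~ finite_set S /\ ~ forward_cycle f S.

(* Equality of cardinal numbers of two families of subsets:
   a bijection between the corresponding subtypes. *)
Definition same_card {T : Type} (P Q : (T -> Prop) -> Prop) : Prop :=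
  exists F : {S | P S} -> {S | Q S}, bijective_map F.

(* Two injective maps f and g that agree outside a finite set E have the same
   open cycles "far enough back".  An open cycle of f is infinite, aperiodic
   and every point of it has arbitrarily long backward chains; as E is finite,
   the cycle contains points t whose whole backward orbit avoids E.  Backward chains
   ending at such a t are the same for f and g, so t also lies on an open cycle
   of g, and two such points of one f-cycle are joined by an f-path that is
   also a g-path.  Sending the f-cycle of t to the g-cycle of t is therefore a
   well-defined bijection between open cycles.  Both hf and fh agree with f
   outside a finite set: the support of h, resp. its preimage under f. *)

From Stdlib Require Import List Arith Lia Classical ClassicalEpsilon
  FunctionalExtensionality PropExtensionality ProofIrrelevance.

Set Implicit Arguments.
Unset Strict Implicit.

Section Cycles.
Variable T : Type.
Implicit Types (f g : T -> T) (x y t w : T) (E : list T) (S : T -> Prop).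

Lemma iter_comm f a b x :
  Nat.iter a f (Nat.iter b f x) = Nat.iter b f (Nat.iter a f x).
Proof. rewrite <- !Nat.iter_add, Nat.add_comm. reflexivity. Qed.

Lemma iter_injective f (Hf : injective_map f) n x y :
  Nat.iter n f x = Nat.iter n f y -> x = y.
Proof. induction n as [|n IH]; simpl; auto. Qed.

Definition same_cycle f x y := exists m n, Nat.iter m f x = Nat.iter n f y.

Lemma same_cycle_refl f x : same_cycle f x x.
Proof. exists 0, 0; reflexivity. Qed.

Lemma same_cycle_sym f x y : same_cycle f x y -> same_cycle f y x.
Proof. intros [m [n H]]. exists n, m; auto. Qed.

Lemma same_cycle_trans f x y z :
  same_cycle f x y -> same_cycle f y z -> same_cycle f x z.
Proof.
  intros [a [b H1]] [c [d H2]]. exists (c + a), (b + d).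
  rewrite !Nat.iter_add, H1, iter_comm, H2. reflexivity.
Qed.

Lemma same_cycle_iter f x n : same_cycle f x (Nat.iter n f x).
Proof. exists n, 0; reflexivity. Qed.

Lemma same_cycle_image f x y : same_cycle f x (f y) <-> same_cycle f x y.
Proof.
  split; intros [m [n H]].
  - exists m, (S n). rewrite Nat.iter_succ_r. exact H.
  - exists (S m), n. rewrite Nat.iter_succ, H, <- Nat.iter_succ, Nat.iter_succ_r.
    reflexivity.
Qed.

Lemma f_closed_iter f S (HS : f_closed f S) n x : S (Nat.iter n f x) <-> S x.
Proof.
  induction n as [|n IH]; simpl; [tauto|].
  etransitivity; [apply HS | exact IH].
Qed.

Lemma f_closed_same_cycle f S (HS : f_closed f S) x y :
  S x -> same_cycle f x y -> S y.
Proof.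
  intros Sx [m [n E]].
  apply (f_closed_iter HS n). rewrite <- E. apply (f_closed_iter HS m), Sx.
Qed.

Lemma same_cycle_is_cycle f x : is_cycle f (same_cycle f x).
Proof.
  split; [exists x; apply same_cycle_refl | split].
  - intro a. apply same_cycle_image.
  - intros S' HS' [y Hy] Hc z Hz.
    apply (f_closed_same_cycle Hc Hy).
    exact (same_cycle_trans (same_cycle_sym (HS' y Hy)) Hz).
Qed.

Lemma is_cycle_same_cycle f S (HS : is_cycle f S) x (Hx : S x) y :
  S y <-> same_cycle f x y.
Proof.
  destruct HS as [_ [Hc Hmin]]. split.
  - intro Hy. apply (Hmin (same_cycle f x)); auto.
    + intros z Hz. exact (f_closed_same_cycle Hc Hx Hz).
    + exists x. apply same_cycle_refl.
    + intro a. apply same_cycle_image.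
  - exact (f_closed_same_cycle Hc Hx).
Qed.

Lemma same_cycle_iter_dir f (Hf : injective_map f) a b :
  same_cycle f a b -> exists k, a = Nat.iter k f b \/ b = Nat.iter k f a.
Proof.
  intros [m [n H]]. destruct (le_lt_dec m n).
  - exists (n - m). left. apply (iter_injective Hf (n := m)).
    rewrite <- Nat.iter_add, H. f_equal. lia.
  - exists (m - n). right. apply (iter_injective Hf (n := n)).
    rewrite <- Nat.iter_add, <- H. f_equal. lia.
Qed.

Lemma periodic_iter_mul f x p (Hp : Nat.iter p f x = x) q :
  Nat.iter (q * p) f x = x.
Proof.
  induction q as [|q IH]; [reflexivity|].
  rewrite Nat.mul_succ_l, Nat.iter_add, Hp. exact IH.
Qed.

Lemma periodic_iter_in_prefix f x k (Hk : Nat.iter (S k) f x = x) i :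
  In (Nat.iter i f x) (map (fun j => Nat.iter j f x) (seq 0 (S k))).
Proof.
  apply in_map_iff. induction i as [|i [j [Ej Hj]]].
  - exists 0. split; [reflexivity | apply in_seq; lia].
  - apply in_seq in Hj. destruct (Nat.eq_dec (S j) (S k)) as [Ejk|Ejk].
    + exists 0. split; [|apply in_seq; lia].
      rewrite Nat.iter_succ, <- Ej, <- Nat.iter_succ, Ejk, Hk. reflexivity.
    + exists (S j). split; [|apply in_seq; lia].
      rewrite !Nat.iter_succ, Ej. reflexivity.
Qed.

Lemma periodic_cycle_finite f (Hf : injective_map f) x k :
  Nat.iter (S k) f x = x -> finite_set (same_cycle f x).
Proof.
  intro Hk. exists (map (fun j => Nat.iter j f x) (seq 0 (S k))). intros y Hy.
  assert (Hiter : exists i, y = Nat.iter i f x).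
  { destruct (same_cycle_iter_dir Hf Hy) as [j [Hx | ->]]; [|eauto].
    (* from x = f^j y and f^(j(k+1)) x = x, cancel f^j to get y = f^(jk) x *)
    exists (j * k). apply (iter_injective Hf (n := j)).
    rewrite <- Hx, <- Nat.iter_add, Nat.add_comm, <- Nat.mul_succ_r.
    symmetry. exact (periodic_iter_mul Hk j). }
  destruct Hiter as [i ->]. apply periodic_iter_in_prefix, Hk.
Qed.

Definition aperiodic f x := forall k, Nat.iter (S k) f x <> x.

Lemma aperiodic_depth_unique f x (Hx : aperiodic f x) e a b :
  Nat.iter a f e = x -> Nat.iter b f e = x -> a = b.
Proof.
  assert (Hlt : forall a b, a < b -> Nat.iter a f e = x -> Nat.iter b f e <> x).
  { intros a' b' Hab Ea Eb. apply (Hx (b' - a' - 1)).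
    rewrite <- Ea at 1. rewrite <- Nat.iter_add.
    replace (S (b' - a' - 1) + a') with b' by lia. exact Eb. }
  intros Ea Eb. destruct (lt_eq_lt_dec a b) as [[Hab|]|Hba]; auto.
  - exfalso. exact (Hlt a b Hab Ea Eb).
  - exfalso. exact (Hlt b a Hba Eb Ea).
Qed.

Lemma aperiodic_iter_injective f (Hf : injective_map f) x (Hx : aperiodic f x) i j :
  Nat.iter i f x = Nat.iter j f x -> i = j.
Proof.
  enough (Hle : forall i j, i <= j -> Nat.iter i f x = Nat.iter j f x -> i = j).
  { intro E. destruct (le_ge_dec i j); [|symmetry]; auto. }
  clear i j. intros i j Hij E.
  assert (Hback : Nat.iter (j - i) f x = x).
  { apply (iter_injective Hf (n := i)). rewrite <- Nat.iter_add, E. f_equal. lia. }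
  pose proof (aperiodic_depth_unique Hx (a := 0) eq_refl Hback). lia.
Qed.

Lemma aperiodic_cycle_infinite f (Hf : injective_map f) x :
  aperiodic f x -> ~ finite_set (same_cycle f x).
Proof.
  intros Hx [l Hl].
  set (orbit := map (fun i => Nat.iter i f x) (seq 0 (S (length l)))).
  assert (Horbit : NoDup orbit).
  { apply NoDup_map_NoDup_ForallPairs; [|apply seq_NoDup].
    intros i j _ _ Eij. exact (aperiodic_iter_injective Hf Hx Eij). }
  assert (Hincl : incl orbit l).
  { intros y Hy. apply in_map_iff in Hy. destruct Hy as [i [<- _]].
    apply Hl, same_cycle_iter. }
  pose proof (NoDup_incl_length Horbit Hincl) as Hlen.
  unfold orbit in Hlen. rewrite length_map, length_seq in Hlen. lia.
Qed.

Definition open_point f x :=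
  aperiodic f x /\ forall n, exists w, Nat.iter n f w = x.

Lemma open_cycle_open_point f (Hf : injective_map f) S :
  open_cycle f S -> forall x, S x -> open_point f x.
Proof.
  intros [Hc [Hinf Hnfwd]] x Hx.
  assert (Hpre : forall z, S z -> exists y, f y = z).
  { intros z Hz. apply NNPP. intro Hno. apply Hnfwd.
    split; [exact Hc | split; [exact Hinf|]].
    exists z. split; [exact Hz|]. intros y Hy. apply Hno. eauto. }
  split.
  - intros k Hk. apply Hinf.
    destruct (periodic_cycle_finite Hf Hk) as [l Hl]. exists l.
    intros y Hy. apply Hl, (is_cycle_same_cycle Hc Hx), Hy.
  - intro n. induction n as [|n [w Hw]]; [exists x; reflexivity|].
    assert (Hw' : S w) by (apply (is_cycle_same_cycle Hc Hx); exists 0, n; auto).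
    destruct (Hpre w Hw') as [y Hy].
    exists y. rewrite Nat.iter_succ_r, Hy. exact Hw.
Qed.

Lemma open_point_open_cycle f (Hf : injective_map f) x :
  open_point f x -> open_cycle f (same_cycle f x).
Proof.
  intros [Hap Hback]. split; [apply same_cycle_is_cycle | split].
  - exact (aperiodic_cycle_infinite Hf Hap).
  - intros [_ [_ [z [Hz Hnopre]]]].
    destruct Hz as [m [n E]]. destruct (Hback (S n)) as [w Hw].
    apply (Hnopre (Nat.iter m f w)). apply (iter_injective Hf (n := n)).
    rewrite <- E, <- Hw, <- Nat.iter_succ, <- !Nat.iter_add. f_equal. lia.
Qed.

Definition back_avoids f E t := forall n w, Nat.iter (S n) f w = t -> ~ In w E.

Lemma open_point_back_avoids f x (Hx : open_point f x) E :
  exists t, same_cycle f x t /\ back_avoids f E t.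
Proof.
  (* each point of E reaches x in at most one number of steps; go back further *)
  assert (Hdepth : exists N, forall e, In e E -> forall d, Nat.iter d f e = x -> d <= N).
  { induction E as [|e E [N HN]]; [exists 0; intros e [] |].
    destruct (classic (exists d, Nat.iter d f e = x)) as [[d0 Hd0]|Hno].
    - exists (max N d0). intros e' [<-|He'] d Hd.
      + rewrite (aperiodic_depth_unique (proj1 Hx) Hd Hd0). lia.
      + specialize (HN e' He' d Hd). lia.
    - exists N. intros e' [<-|He'] d Hd; [exfalso; eauto | eauto]. }
  destruct Hdepth as [N HN]. destruct (proj2 Hx N) as [t Ht].
  exists t. split; [exists 0, N; auto|].
  intros n w Hw Hin.
  assert (Hreach : Nat.iter (N + S n) f w = x) by (rewrite Nat.iter_add, Hw; exact Ht).
  specialize (HN w Hin _ Hreach). lia.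
Qed.

Section Agree.
Variables (f g : T -> T) (E : list T).
Hypothesis f_inj : injective_map f.
Hypothesis g_inj : injective_map g.
Hypothesis fg_agree : forall a, ~ In a E -> f a = g a.

Lemma iter_agree_back_avoids t (Ht : back_avoids f E t) n w :
  Nat.iter n f w = t -> Nat.iter n g w = t.
Proof.
  intro Hw.
  assert (Hpath : forall i, i <= n -> Nat.iter i f w = Nat.iter i g w).
  { induction i as [|i IH]; intro Hi; [reflexivity|].
    rewrite !Nat.iter_succ, <- IH by lia. apply fg_agree.
    apply (Ht (n - 1 - i)). rewrite <- Nat.iter_add, <- Hw. f_equal. lia. }
  rewrite <- Hpath by lia. exact Hw.
Qed.

Lemma open_point_agree t :
  open_point f t -> back_avoids f E t -> open_point g t /\ back_avoids g E t.
Proof.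
  intros [Hap Hback] Ht.
  (* the g-predecessor chains of t are the f-ones, by injectivity of g *)
  assert (Hchain : forall n w, Nat.iter n g w = t -> Nat.iter n f w = t).
  { intros n w Hw. destruct (Hback n) as [v Hv].
    replace w with v; [exact Hv|].
    apply (iter_injective g_inj (n := n)). rewrite Hw. exact (iter_agree_back_avoids Ht Hv). }
  split; [split|].
  - intros k Hk. exact (Hap k (Hchain _ _ Hk)).
  - intro n. destruct (Hback n) as [w Hw].
    exists w. exact (iter_agree_back_avoids Ht Hw).
  - intros n w Hw. exact (Ht n w (Hchain _ _ Hw)).
Qed.

Lemma same_cycle_agree t1 t2 :
  back_avoids f E t1 -> back_avoids f E t2 -> same_cycle f t1 t2 -> same_cycle g t1 t2.
Proof.
  intros H1 H2 H12. destruct (same_cycle_iter_dir f_inj H12) as [k [Hk|Hk]].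
  - exists 0, k. symmetry. exact (iter_agree_back_avoids H1 (eq_sym Hk)).
  - exists k, 0. exact (iter_agree_back_avoids H2 (eq_sym Hk)).
Qed.

Definition linked_cycles S S' :=
  exists t, S t /\ S' t /\ back_avoids f E t /\ back_avoids g E t.

Lemma open_cycle_linked S :
  open_cycle f S -> exists S', open_cycle g S' /\ linked_cycles S S'.
Proof.
  intro HS. destruct (proj1 (proj1 HS)) as [x Hx].
  destruct (open_point_back_avoids (open_cycle_open_point f_inj HS Hx) E)
    as [t [Hxt Ht]].
  assert (St : S t) by exact (proj2 (is_cycle_same_cycle (proj1 HS) Hx t) Hxt).
  destruct (open_point_agree (open_cycle_open_point f_inj HS St) Ht) as [Og Htg].
  exists (same_cycle g t). split; [exact (open_point_open_cycle g_inj Og)|].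
  exists t. repeat split; auto using same_cycle_refl.
Qed.

Lemma linked_cycles_unique S S1 S2 :
  is_cycle f S -> is_cycle g S1 -> is_cycle g S2 ->
  linked_cycles S S1 -> linked_cycles S S2 -> S1 = S2.
Proof.
  intros HS HS1 HS2 [t1 [St1 [S1t1 [Ht1 _]]]] [t2 [St2 [S2t2 [Ht2 _]]]].
  assert (H12 : same_cycle g t1 t2).
  { apply same_cycle_agree; auto. exact (proj1 (is_cycle_same_cycle HS St1 t2) St2). }
  apply functional_extensionality. intro y. apply propositional_extensionality.
  rewrite (is_cycle_same_cycle HS1 S1t1), (is_cycle_same_cycle HS2 S2t2).
  split; intro Hy.
  - exact (same_cycle_trans (same_cycle_sym H12) Hy).
  - exact (same_cycle_trans H12 Hy).
Qed.

End Agree.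

Lemma linked_cycles_sym f g E S S' :
  linked_cycles f g E S S' -> linked_cycles g f E S' S.
Proof. intros [t Ht]. exists t. tauto. Qed.

End Cycles.

Lemma bijective_of_relation {A B : Type} (R : A -> B -> Prop) :
  (forall a, exists b, R a b) -> (forall b, exists a, R a b) ->
  (forall a b b', R a b -> R a b' -> b = b') ->
  (forall a a' b, R a b -> R a' b -> a = a') ->
  exists F : A -> B, bijective_map F.
Proof.
  intros Hl Hr Hfun Hinj.
  exists (fun a => proj1_sig (constructive_indefinite_description _ (Hl a))).
  exists (fun b => proj1_sig (constructive_indefinite_description _ (Hr b))).
  split.
  - intro a. destruct (constructive_indefinite_description _ (Hl a)) as [b Hb]; simpl.
    destruct (constructive_indefinite_description _ (Hr b)) as [a' Ha']; simpl.
    exact (Hinj _ _ _ Ha' Hb).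
  - intro b. destruct (constructive_indefinite_description _ (Hr b)) as [a Ha]; simpl.
    destruct (constructive_indefinite_description _ (Hl a)) as [b' Hb']; simpl.
    exact (Hfun _ _ _ Hb' Ha).
Qed.

Lemma same_card_open_cycle_agree (T : Type) (f g : T -> T) (E : list T) :
  injective_map f -> injective_map g -> (forall a, ~ In a E -> f a = g a) ->
  same_card (open_cycle f) (open_cycle g).
Proof.
  intros Hf Hg Hfg.
  assert (Hgf : forall a, ~ In a E -> g a = f a) by (intros; symmetry; auto).
  assert (Hsig : forall P (u v : {S : T -> Prop | P S}), proj1_sig u = proj1_sig v -> u = v)
    by (intros; apply eq_sig_hprop; auto using proof_irrelevance).
  apply (bijective_of_relation (R :=
           (fun (a : {S | open_cycle f S}) (b : {S | open_cycle g S}) =>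
              linked_cycles f g E (proj1_sig a) (proj1_sig b)))).
  - intros [S HS]. destruct (open_cycle_linked Hf Hg Hfg HS) as [S' [HS' HL]].
    exists (exist _ S' HS'). exact HL.
  - intros [S HS]. destruct (open_cycle_linked Hg Hf Hgf HS) as [S' [HS' HL]].
    exists (exist _ S' HS'). exact (linked_cycles_sym HL).
  - intros [S HS] [S1 HS1] [S2 HS2] H1 H2. apply Hsig.
    exact (linked_cycles_unique Hf Hfg (proj1 HS) (proj1 HS1) (proj1 HS2) H1 H2).
  - intros [S1 HS1] [S2 HS2] [S HS] H1 H2. apply Hsig.
    exact (linked_cycles_unique Hg Hgf (proj1 HS) (proj1 HS1) (proj1 HS2)
             (linked_cycles_sym H1) (linked_cycles_sym H2)).
Qed.

Lemma finitary_perm_fixes_outside (T : Type) (h : T -> T) (Hh : finitary_perm h) :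
  exists l, forall a, ~ In a l -> h a = a.
Proof.
  destruct Hh as [_ [l Hl]]. exists l. intros a Ha.
  apply NNPP. intro Hmove. exact (Ha (Hl a Hmove)).
Qed.

Lemma finitary_perm_injective (T : Type) (h : T -> T) :
  finitary_perm h -> injective_map h.
Proof.
  intros [[h' [Hh' _]] _] x y E. rewrite <- (Hh' x), <- (Hh' y), E. reflexivity.
Qed.

Lemma injective_preimage_list (T : Type) (f : T -> T) (Hf : injective_map f) l :
  exists E, forall a, In (f a) l -> In a E.
Proof.
  induction l as [|y l [E HE]]; [exists nil; intros a [] |].
  destruct (classic (exists a, f a = y)) as [[a0 Ha0]|Hno].
  - exists (a0 :: E). intros a [Ha|Ha]; [left; apply Hf; congruence | right; auto].
  - exists E. intros a [Ha|Ha]; [exfalso; eauto | auto].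
Qed.

Theorem mainTheorem7 (T : Type) (HT : countably_infinite T)
  (f h : T -> T) (Hf : injective_map f) (Hh : finitary_perm h) :
  same_card (open_cycle f) (open_cycle (lrcomp h f)) /\
  same_card (open_cycle f) (open_cycle (lrcomp f h)).
Proof.
  pose proof (finitary_perm_injective Hh) as Hhinj.
  destruct (finitary_perm_fixes_outside Hh) as [l Hfix].
  destruct (injective_preimage_list Hf l) as [E HE].
  unfold lrcomp. split.
  - apply (same_card_open_cycle_agree (E := l)); auto.
    + intros x y Exy. apply Hhinj, Hf, Exy.
    + intros a Ha. rewrite Hfix; auto.
  - apply (same_card_open_cycle_agree (E := E)); auto.
    + intros x y Exy. apply Hf, Hhinj, Exy.
    + intros a Ha. rewrite Hfix; auto.
Qed.
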